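(* For every $x\in H$, \[ S^{\delta,\mathscr{P}}_{\pi}(x)\le\sum_{a\in\mathcal{A}}\pi(a|x)\,Q^{\delta,\mathscr{P}}_{\pi}(x,a). \]
   Context: Consider a Markov decision process with a finite state set $\mathcal{X}$, viewed as a subset of $\mathbb{R}$ (so $|y-z|$ is the distance between states), and a finite action set $\mathcal{A}$. The state set is partitioned into a goal set $E$, a forbidden (unsafe) set $U$, and $H:=\mathcal{X}\setminus(E\cup U)$; $E$ and $U$ are terminal (the process stops there). For each $(x,a)\in H\times\mathcal{A}$ a nominal transition probability $\mathcal{P}_{x,a}=\{P_{x,a}(y)\}_{y\in\mathcal{X}}$ on $\mathcal{X}$ is given, and $\mathscr{P}=\{\mathcal{P}_{x,a}\}_{(x,a)\in H\times\mathcal{A}}$; transition probabilities are time-invariant. The sample space is $\Omega=(\mathcal{X}\times\mathcal{A})^{\infty}$ with coordinate processes $X_t,A_t$. A stationary policy is $\pi:\mathcal{X}\to\mathscr{M}(\mathcal{A})$, written $\pi(a|x)$. For any collection $\tilde{\mathscr{P}}=\{\tilde{\mathcal{P}}_{x,a}\}_{(x,a)\in H\times\mathcal{A}}$ of transition probabilities, $\mathbb{P}^{\tilde{\mathscr{P}}}_{\pi}$ and $\mathbb{E}^{\tilde{\mathscr{P}}}_{\pi}$ denote probability and expectation for the process with $X_{t+1}\sim\tilde{\mathcal{P}}_{X_t,A_t}$ and $A_t\sim\pi(\cdot|X_t)$ (except when $A_0$ is conditioned on). For $S\subseteq\mathcal{X}$, $\tau_S$ is the first hitting time of $S$, and $\tau=\tau_{E\cup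 U}$. The 1-Wasserstein distance between probability measures $\mu,\nu$ on $\mathcal{X}$ is $W(\mu,\nu)=\min\{\sum_{(y,z)}\Gamma(y,z)|y-z| : \Gamma\in\mathscr{M}(\mathcal{X}\times\mathcal{X}),\ \sum_z\Gamma(y,z)=\mu(y),\ \sum_y\Gamma(y,z)=\nu(z)\}$. For $\delta\ge0$, $\mathcal{D}^{\delta}_{x,a}=\{\tilde{\mathcal{P}}_{x,a}\in\mathscr{M}(\mathcal{X}): W(\tilde{\mathcal{P}}_{x,a},\mathcal{P}_{x,a})\le\delta\}$ and $\mathscr{D}^{\delta}=\prod_{(x,a)\in H\times\mathcal{A}}\mathcal{D}^{\delta}_{x,a}$. The robust safety function is $S^{\delta,\mathscr{P}}_{\pi}(x)=\sup_{\tilde{\mathscr{P}}\in\mathscr{D}^{\delta}}\mathbb{P}^{\tilde{\mathscr{P}}}_{\pi}[\tau_U<\tau_E\mid X_0=x]$ for $x\in H$. The robust Q-function is, for $(x,a)\in H\times\mathcal{A}$, $Q^{\delta,\mathscr{P}}_{\pi}(x,a)=\sup_{\tilde{\mathscr{P}}\in\mathscr{D}^{\delta}}\mathbb{E}^{\tilde{\mathscr{P}}}_{\pi}\big[\sum_{t=0}^{\tau-1}c_{t+1}\mid X_0=x,A_0=a\big]$, where $c_{t+1}=1$ if $X_{t+1}\in U$ and $0$ otherwise. *)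

From HB Require Import structures.
From mathcomp Require Import all_boot all_order all_algebra.
From mathcomp Require Import boolp classical_sets reals constructive_ereal ereal.

Set Implicit Arguments.
Unset Strict Implicit.
Unset Printing Implicit Defensive.

Import Order.TTheory GRing.Theory Num.Theory.
Local Open Scope ring_scope.
Local Open Scope classical_set_scope.

Section MDP.
Variables (R : realType) (X A : finType).

Definition is_distr (T : finType) (mu : {ffun T -> R}) : Prop :=
  (forall t, 0 <= mu t) /\ \sum_(t : T) mu t = 1.

Definition coupling (mu nu : {ffun X -> R}) (G : {ffun X * X -> R}) : Prop :=
  [/\ forall p, 0 <= G p,
      forall y, \sum_(z : X) G (y, z) = mu y
    & forall z, \sum_(y : X) G (y, z) = nu z].

(* 1-Wasserstein distance; states are embedded in R via pos *)
Definition Wdist (pos : X -> R) (mu nu : {ffun X -> R}) : R :=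
  inf [set c : R | exists G, coupling mu nu G /\
         c = \sum_(p : X * X) G p * `|pos p.1 - pos p.2|].

Definition Hset (E U : {set X}) : {set X} := ~: (E :|: U).

(* Probability weight of a finite trajectory x = X_0, (A_0,X_1), ..., (A_{k-1},X_k);
   rho is the law of A_0, later actions are drawn from pi(.|X_t) and
   X_{t+1} ~ Pt X_t A_t. *)
Fixpoint pw (Pt : X -> A -> {ffun X -> R}) (pi : X -> {ffun A -> R})
    (rho : {ffun A -> R}) (x : X) (s : seq (A * X)) : R :=
  match s with
  | [::] => 1
  | p :: s' => rho p.1 * Pt x p.1 p.2 * pw Pt pi (pi p.2) p.2 s'
  end.

(* s is a trajectory of the process stopped at min(tau, n): all states before
   the last are in H, and either the last state is terminal or the length is n *)
Definition stopped_ok (E U : {set X}) (n : nat) (x : X) (s : seq (A * X)) : bool :=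
  all (fun y => y \in Hset E U) (belast x (map snd s)) &&
  ((last x (map snd s) \notin Hset E U) || (size s == n)).

(* expectation of a functional G of the trajectory stopped at min(tau, n) *)
Definition stoppedE (E U : {set X}) (Pt : X -> A -> {ffun X -> R})
    (pi : X -> {ffun A -> R}) (rho : {ffun A -> R}) (x : X) (n : nat)
    (G : X -> seq (A * X) -> R) : R :=
  \sum_(k < n.+1) \sum_(s : k.-tuple (A * X) | stopped_ok E U n x s)
     pw Pt pi rho x s * G x s.

(* indicator of {tau_U < tau_E} (evaluated on the stopped trajectory) *)
Definition hitU (U : {set X}) (x : X) (s : seq (A * X)) : R :=
  ((last x (map snd s)) \in U)%:R.

(* sum_{t=0}^{tau-1} c_{t+1}, c_{t+1} = 1_{X_{t+1} in U} (on the stopped trajectory) *)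
Definition costU (U : {set X}) (x : X) (s : seq (A * X)) : R :=
  (count (fun y => y \in U) (map snd s))%:R.

Definition inAmb (pos : X -> R) (E U : {set X}) (P : X -> A -> {ffun X -> R})
    (delta : R) (Pt : X -> A -> {ffun X -> R}) : Prop :=
  forall x, x \in Hset E U -> forall a,
    is_distr (Pt x a) /\ Wdist pos (Pt x a) (P x a) <= delta.

(* robust safety function: sup over D^delta of P[tau_U < tau_E | X_0 = x],
   the latter being sup_n P[tau_U < tau_E, tau_U <= n] (continuity of measure) *)
Definition safetyS (pos : X -> R) (E U : {set X}) (P : X -> A -> {ffun X -> R})
    (pi : X -> {ffun A -> R}) (delta : R) (x : X) : \bar R :=
  ereal_sup [set e | exists Pt, inAmb pos E U P delta Pt /\
    e = ereal_sup (range (fun n : nat => (stoppedE E U Pt pi (pi x) x n (@hitU U))%:E))].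

(* robust Q-function: A_0 = a is conditioned on; the expected cost is
   sup_n E[sum_{t < min(tau,n)} c_{t+1}] (monotone convergence) *)
Definition robustQ (pos : X -> R) (E U : {set X}) (P : X -> A -> {ffun X -> R})
    (pi : X -> {ffun A -> R}) (delta : R) (x : X) (a : A) : \bar R :=
  ereal_sup [set e | exists Pt, inAmb pos E U P delta Pt /\
    e = ereal_sup (range (fun n : nat =>
          (stoppedE E U Pt pi [ffun b => (b == a)%:R] x n (@costU U))%:E))].

End MDP.

From HB Require Import structures.
From mathcomp Require Import all_boot all_order all_algebra.
From mathcomp Require Import boolp classical_sets reals constructive_ereal ereal.
Import Order.TTheory GRing.Theory Num.Theory.
Local Open Scope ring_scope.

Set Implicit Arguments.
Unset Strict Implicit.

(* For a fixed kernel Pt in the ambiguity set and a fixed horizon n, the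
   stopped expectation is linear in the law of A_0, so drawing A_0 from
   pi(.|x) mixes the expectations with A_0 = a.  Pathwise, the indicator of
   ending in U is bounded by the number of visits to U.  Hence
   P[hit U] <= sum_a pi(a|x) E[cost | A_0 = a] <= sum_a pi(a|x) Q(x,a), and
   taking suprema over n and Pt gives the claim. *)

Section StoppedExpectation.
Variables (R : realType) (X A : finType) (E U : {set X}).
Variables (Pt : X -> A -> {ffun X -> R}) (pi : X -> {ffun A -> R}).

Lemma pw_mix (rho : {ffun A -> R}) (x : X) (s : seq (A * X)) :
  \sum_(a : A) rho a = 1 ->
  pw Pt pi rho x s = \sum_(a : A) rho a * pw Pt pi [ffun b => (b == a)%:R] x s.
Proof.
move=> rho1; case: s => [|p s] /=; first by under eq_bigr do rewrite mulr1.
rewrite (bigD1 p.1) //= big1 ?addr0; first by rewrite ffunE eqxx mul1r mulrA.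
by move=> a /negbTE pa; rewrite ffunE eq_sym pa !mul0r mulr0.
Qed.

Lemma stoppedE_mix (rho : {ffun A -> R}) (x : X) (n : nat)
    (G : X -> seq (A * X) -> R) :
  \sum_(a : A) rho a = 1 ->
  stoppedE E U Pt pi rho x n G =
  \sum_(a : A) rho a * stoppedE E U Pt pi [ffun b => (b == a)%:R] x n G.
Proof.
move=> rho1; rewrite /stoppedE.
under [RHS]eq_bigr do rewrite big_distrr /=.
rewrite exchange_big; apply: eq_bigr => k _.
under [RHS]eq_bigr do rewrite big_distrr /=.
rewrite exchange_big; apply: eq_bigr => s _.
by rewrite (pw_mix _ _ rho1) big_distrl; apply: eq_bigr => a _; rewrite mulrA.
Qed.

Hypothesis Pt_ge0 : forall y, y \in Hset E U -> forall a z, 0 <= Pt y a z.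
Hypothesis pi_ge0 : forall y a, 0 <= pi y a.

Lemma pw_ge0 (s : seq (A * X)) (rho : {ffun A -> R}) (x : X) :
  (forall a, 0 <= rho a) ->
  all (fun y => y \in Hset E U) (belast x (map snd s)) -> 0 <= pw Pt pi rho x s.
Proof.
elim: s rho x => [|p s IH] rho x rho_ge0 /=; first by rewrite ler01.
case/andP => xH sH.
by rewrite !mulr_ge0 ?rho_ge0 ?Pt_ge0 ?IH.
Qed.

Lemma ler_stoppedE (rho : {ffun A -> R}) (x : X) (n : nat)
    (G1 G2 : X -> seq (A * X) -> R) :
  (forall a, 0 <= rho a) ->
  (forall s, stopped_ok E U n x s -> G1 x s <= G2 x s) ->
  stoppedE E U Pt pi rho x n G1 <= stoppedE E U Pt pi rho x n G2.
Proof.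
move=> rho_ge0 G12; apply: ler_sum => k _; apply: ler_sum => s s_ok.
rewrite ler_wpM2l ?G12 // pw_ge0 //.
by case/andP: s_ok.
Qed.

End StoppedExpectation.

Lemma hitU_le_costU (R : realType) (X A : finType) (U : {set X}) (x : X)
    (s : seq (A * X)) :
  x \notin U -> hitU R U x s <= costU R U x s.
Proof.
move=> xU; rewrite /hitU /costU.
have [lastU|] := boolP (last x (map snd s) \in U); last by rewrite ler0n.
rewrite ler_nat -has_count; apply/hasP; exists (last x (map snd s)) => //.
move: (mem_last x (map snd s)); rewrite inE => /orP[/eqP lastx|] //.
by rewrite -lastx lastU in xU.
Qed.

Lemma stoppedE_le_robustQ (R : realType) (X A : finType) (pos : X -> R)
    (E U : {set X}) (P Pt : X -> A -> {ffun X -> R}) (pi : X -> {ffun A -> R})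
    (delta : R) (x : X) (a : A) (n : nat) :
  inAmb pos E U P delta Pt ->
  ((stoppedE E U Pt pi [ffun b => (b == a)%:R] x n (@costU R X A U))%:E
    <= robustQ pos E U P pi delta x a)%E.
Proof.
move=> PtD; apply: le_ereal_sup_tmp; eexists; first by exists Pt.
by apply: le_ereal_sup_tmp; eexists => //; exists n.
Qed.

Theorem mainTheorem3 (R : realType) (X A : finType) (pos : X -> R)
  (pos_inj : injective pos) (E U : {set X}) (EU_disj : [disjoint E & U])
  (P : X -> A -> {ffun X -> R})
  (P_distr : forall x, x \in Hset E U -> forall a, is_distr (P x a))
  (pi : X -> {ffun A -> R}) (pi_distr : forall x, is_distr (pi x))
  (delta : R) (delta_ge0 : 0 <= delta) (x : X) (xH : x \in Hset E U) :
  (safetyS pos E U P pi delta x <=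
   \sum_(a : A) ((pi x a)%:E * robustQ pos E U P pi delta x a))%E.
Proof.
apply: ge_ereal_sup => _ [Pt [PtD ->]]; apply: ge_ereal_sup => _ [n _ <-].
have Pt_ge0 y (yH : y \in Hset E U) a z : 0 <= Pt y a z.
  by have [[/(_ z)]] := PtD y yH a.
have pi_ge0 y a : 0 <= pi y a by have [/(_ a)] := pi_distr y.
have xU : x \notin U by move: xH; rewrite !inE negb_or => /andP[].
have [_ pix1] := pi_distr x.
apply: le_trans (_ : (\sum_(a : A) (pi x a)%:E *
  (stoppedE E U Pt pi [ffun b => (b == a)%:R] x n (@costU R X A U))%:E <= _)%E).
  rewrite -(eq_bigr _ (fun a _ => EFinM _ _)) sumEFin lee_fin -stoppedE_mix //.
  by apply: ler_stoppedE => // s _; exact: hitU_le_costU.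
apply: lee_sum => a _; rewrite lee_wpmul2l ?lee_fin //.
exact: stoppedE_le_robustQ.
Qed.
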